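(* There exist $\mu_\lambda\in\overline{\mathbb Q}$ $(\lambda\in\Lambda)$ with $\mu_\lambda^3=\lambda$ such that $\sum_{\lambda\in\Lambda}c_\lambda\mu_\lambda=0$. Likewise, there exist $\eta_\lambda\in\overline{\mathbb Q}$ $(\lambda\in\Lambda)$ with $\eta_\lambda^3=\lambda$ such that $\sum_{\lambda\in\Lambda}c_\lambda\eta_\lambda^{-5}=0$.
   Context: $\Lambda=\{\lambda_1,\lambda_2,\lambda_3\}\subset\overline{\mathbb Q}$ is the set of roots of $P(X)=X^3-X^2-X-1$, and $c_\lambda=\lambda P'(\lambda)^{-1}$ for $\lambda\in\Lambda$ (so that the Tribonacci numbers are $T(n)=\sum_{\lambda\in\Lambda}c_\lambda\lambda^n$). *)

(* algC serves as the algebraic closure of Q. *)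
From mathcomp Require Import all_boot all_order all_algebra all_field.
Set Implicit Arguments. Unset Strict Implicit. Unset Printing Implicit Defensive.
Import Order.TTheory GRing.Theory Num.Theory.
Local Open Scope ring_scope.

Definition Ptrib : {poly algC} := 'X^3 - 'X^2 - 'X - 1.

Definition ctrib (l : algC) : algC := l * ((Ptrib^`()).[l])^-1.

From mathcomp Require Import all_boot all_order all_algebra all_field.
From mathcomp Require Import ring.
(* Let t = 2^(1/3) and let u1, u2, u3 be the roots of X^3 - t^2 X^2 + t X - 1.
   By Newton's identities the cubes u_i^3 are the roots of P = X^3 - X^2 - X - 1,
   distinct since P is separable, so mu (u_i^3) := u_i is well defined.
   As c_l = l / prod_(l' <> l) (l - l'), the sum of c_l mu_l^k (k = 1 or -5) is
   an alternating sum over the u_i divided by prod_(i<j) (u_i^3 - u_j^3); its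
   numerator is the Vandermonde determinant of the u_i times a symmetric
   polynomial, namely e2^2 - e1 e3 = t^2 - t^2 for k = 1 and (after clearing
   e3 = 1) e1^2 e2 - e2^2 - e1 e3 = t^5 - 2 t^2 for k = -5.  Both vanish, so
   eta := mu works as well. *)

Set Implicit Arguments. Unset Strict Implicit. Unset Printing Implicit Defensive.
Import GRing.Theory Num.Theory.
Local Open Scope ring_scope.

Lemma uniq_map_cancel_in (T U : eqType) (x0 : T) (f : T -> U) (s : seq T) :
  uniq (map f s) -> exists g : U -> T, {in s, cancel f g}.
Proof.
move=> uniq_fs; exists (fun y => nth x0 s (index y (map f s))) => x sx.
have sx_lt : (index x s < size s)%N by rewrite index_mem.
rewrite -{1}(nth_index x0 sx) -(nth_map x0 (f x0)) //.
by rewrite index_uniq ?size_map // nth_index.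
Qed.

Lemma prod_XsubC3 (R : comNzRingType) (a b c : R) :
  \prod_(z <- [:: a; b; c]) ('X - z%:P) =
  'X^3 - (a + b + c)%:P * 'X^2 + (a * b + a * c + b * c)%:P * 'X - (a * b * c)%:P.
Proof. by rewrite !big_cons big_nil !rmorphD !rmorphM /=; ring. Qed.

Lemma horner_deriv_prod_XsubC3 (R : comNzRingType) (a b c : R) :
  let P := \prod_(z <- [:: a; b; c]) ('X - z%:P) in
  [/\ P^`().[a] = (a - b) * (a - c), P^`().[b] = (b - a) * (b - c)
     & P^`().[c] = (c - a) * (c - b)].
Proof. by rewrite /= prod_XsubC3 !derivE !hornerE /=; split; ring. Qed.

Lemma cubic_coefs_inj (R : nzRingType) (s p q s' p' q' : R) :
  'X^3 - s%:P * 'X^2 + p%:P * 'X - q%:P = 'X^3 - s'%:P * 'X^2 + p'%:P * 'X - q'%:P ->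
  [/\ s = s', p = p' & q = q'].
Proof.
move=> e; have coef_eq i := congr1 (fun P : {poly R} => P`_i) e.
move: (coef_eq 2%N) (coef_eq 1%N) (coef_eq 0%N); rewrite !coefE /=.
by rewrite !(mulr0, mulr1, addr0, add0r, subr0, sub0r, oppr0) => /oppr_inj-> -> /oppr_inj->.
Qed.

Lemma closed_cubic_roots (F : closedFieldType) (s p q : F) :
  exists a b c : F, [/\ a + b + c = s, a * b + a * c + b * c = p & a * b * c = q].
Proof.
pose P : {poly F} := 'X^3 - s%:P * 'X^2 + p%:P * 'X - q%:P.
have P3 : P`_3 = 1 by rewrite !coefE /=; ring.
have sizeP : size P = 4.
  apply/anti_leq/andP; split.
    by apply/leq_sizeP => -[|[|[|[|j]]]] // _; rewrite !coefE /=; ring.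
  rewrite ltnNge; apply/negP => /leq_sizeP/(_ 3 (leqnn 3)).
  by rewrite P3; exact/eqP/oner_neq0.
have [r defP] := closed_field_poly_normal P.
rewrite lead_coefE sizeP P3 scale1r in defP.
have := size_prod_XsubC r id; rewrite -defP sizeP.
case: r defP => [|a [|b [|c [|]]]] //= defP _.
rewrite prod_XsubC3 in defP.
by exists a, b, c; have [-> -> ->] := cubic_coefs_inj defP.
Qed.

Lemma deriv_Ptrib : Ptrib^`() = 3 * 'X^2 - 2 * 'X - 1.
Proof. by rewrite /Ptrib !derivE /=; ring. Qed.

Lemma Ptrib_separable : separable_poly Ptrib.
Proof.
rewrite unlock; apply/Bezout_eq1_coprimepP.
exists ((22 : algC)^-1%:P * (12 * 'X - 23),
        (22 : algC)^-1%:P * (- 4 * 'X^2 + 9 * 'X + 1)) => /=.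
rewrite deriv_Ptrib /Ptrib -!mulrA -mulrDr.
have -> : (12 * 'X - 23) * ('X^3 - 'X^2 - 'X - 1)
          + (- 4 * 'X^2 + 9 * 'X + 1) * (3 * 'X^2 - 2 * 'X - 1) = (22 : algC)%:P.
  by rewrite rmorph_nat; ring.
by rewrite -polyCM mulVf ?pnatr_eq0.
Qed.

Lemma prod_XsubC_cubes3 (R : comNzRingType) (a b c : R) :
  let s := a + b + c in let p := a * b + a * c + b * c in let q := a * b * c in
  \prod_(z <- [:: a ^+ 3; b ^+ 3; c ^+ 3]) ('X - z%:P) =
  'X^3 - (s ^+ 3 - 3 * s * p + 3 * q)%:P * 'X^2
       + (p ^+ 3 - 3 * s * p * q + 3 * q ^+ 2)%:P * 'X - (q ^+ 3)%:P.
Proof. by rewrite prod_XsubC3 /=; congr (_ - _ * _ + _ * _ - _%:P); ring. Qed.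

Section CubeRootsOfTribonacciRoots.

Variables t u1 u2 u3 : algC.
Hypotheses (t_cube : t ^+ 3 = 2) (sum_u : u1 + u2 + u3 = t ^+ 2)
  (sum_prod2_u : u1 * u2 + u1 * u3 + u2 * u3 = t) (prod_u : u1 * u2 * u3 = 1).

Lemma Ptrib_prod_cubes : Ptrib = \prod_(z <- [:: u1 ^+ 3; u2 ^+ 3; u3 ^+ 3]) ('X - z%:P).
Proof.
rewrite prod_XsubC_cubes3 /= sum_u sum_prod2_u prod_u /Ptrib.
have -> : (t ^+ 2) ^+ 3 - 3 * t ^+ 2 * t + 3 * 1 = 1.
  by transitivity ((t ^+ 3) ^+ 2 - 3 * t ^+ 3 + 3); [ring | rewrite t_cube; ring].
have -> : t ^+ 3 - 3 * t ^+ 2 * t * 1 + 3 * 1 ^+ 2 = -1.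
  by transitivity (- 2 * t ^+ 3 + 3); [ring | rewrite t_cube; ring].
by rewrite expr1n polyCN polyC1; ring.
Qed.

Lemma uniq_cubes : uniq [:: u1 ^+ 3; u2 ^+ 3; u3 ^+ 3].
Proof. by rewrite -separable_prod_XsubC -Ptrib_prod_cubes Ptrib_separable. Qed.

Lemma cubes_neq : [/\ u1 ^+ 3 != u2 ^+ 3, u1 ^+ 3 != u3 ^+ 3 & u2 ^+ 3 != u3 ^+ 3].
Proof.
by move: uniq_cubes; rewrite /= !inE negb_or andbT => /andP[/andP[-> ->] ->].
Qed.

Lemma ctrib_cubes :
  let x1 := u1 ^+ 3 in let x2 := u2 ^+ 3 in let x3 := u3 ^+ 3 in
  [/\ ctrib x1 = x1 / ((x1 - x2) * (x1 - x3)), ctrib x2 = x2 / ((x2 - x1) * (x2 - x3))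
    & ctrib x3 = x3 / ((x3 - x1) * (x3 - x2))].
Proof.
have /= [d1 d2 d3] := horner_deriv_prod_XsubC3 (u1 ^+ 3) (u2 ^+ 3) (u3 ^+ 3).
by rewrite /ctrib Ptrib_prod_cubes d1 d2 d3.
Qed.

Lemma sum_ctrib_cube_mul_root : \sum_(u <- [:: u1; u2; u3]) ctrib (u ^+ 3) * u = 0.
Proof.
have [d12 d13 d23] := cubes_neq; have /= [c1 c2 c3] := ctrib_cubes.
rewrite !big_cons big_nil c1 c2 c3 addr0.
transitivity ((u1 - u2) * (u1 - u3) * (u2 - u3)
  * ((u1 * u2 + u1 * u3 + u2 * u3) ^+ 2 - (u1 + u2 + u3) * (u1 * u2 * u3))
  / ((u1 ^+ 3 - u2 ^+ 3) * (u1 ^+ 3 - u3 ^+ 3) * (u2 ^+ 3 - u3 ^+ 3))).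
  by field; rewrite !subr_eq0 ![_ == u1 ^+ 3]eq_sym ![u3 ^+ 3 == _]eq_sym d12 d13 d23.
by rewrite sum_prod2_u sum_u prod_u mulr1 subrr mulr0 mul0r.
Qed.

Lemma sum_ctrib_cube_mul_root_expN5 :
  \sum_(u <- [:: u1; u2; u3]) ctrib (u ^+ 3) * u ^- 5 = 0.
Proof.
have [d12 d13 d23] := cubes_neq; have /= [c1 c2 c3] := ctrib_cubes.
have := oner_neq0 algC; rewrite -prod_u !mulf_eq0 !negb_or => /andP[/andP[nz1 nz2] nz3].
rewrite !big_cons big_nil c1 c2 c3 addr0.
transitivity ((u1 - u2) * (u1 - u3) * (u2 - u3)
  * ((u1 + u2 + u3) ^+ 2 * (u1 * u2 + u1 * u3 + u2 * u3)
     - (u1 * u2 + u1 * u3 + u2 * u3) ^+ 2 - (u1 + u2 + u3) * (u1 * u2 * u3))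
  / ((u1 * u2 * u3) ^+ 2 * ((u1 ^+ 3 - u2 ^+ 3) * (u1 ^+ 3 - u3 ^+ 3) * (u2 ^+ 3 - u3 ^+ 3)))).
  by field; rewrite nz1 nz2 nz3 !subr_eq0 ![_ == u1 ^+ 3]eq_sym ![u3 ^+ 3 == _]eq_sym d12 d13 d23.
rewrite sum_prod2_u sum_u prod_u mulr1.
have -> : (t ^+ 2) ^+ 2 * t - t ^+ 2 - t ^+ 2 = t ^+ 2 * (t ^+ 3 - 2) by ring.
by rewrite t_cube subrr !mulr0 mul0r.
Qed.

End CubeRootsOfTribonacciRoots.

Theorem mainTheorem5 (rs : seq algC)
  (hrs : Ptrib = \prod_(z <- rs) ('X - z%:P)) :
  (exists mu : algC -> algC,
     (forall l, l \in rs -> mu l ^+ 3 = l) /\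
     \sum_(l <- rs) ctrib l * mu l = 0) /\
  (exists eta : algC -> algC,
     (forall l, l \in rs -> eta l ^+ 3 = l) /\
     \sum_(l <- rs) ctrib l * (eta l) ^- 5 = 0).
Proof.
have [t t_cube] : exists t : algC, t ^+ 3 = 2 by exists (3.-root 2); rewrite rootCK.
have [u1 [u2 [u3 [sum_u sum_prod2_u prod_u]]]] := closed_cubic_roots (t ^+ 2) t 1.
pose us := [:: u1; u2; u3].
have rs_cubes : perm_eq rs [seq u ^+ 3 | u <- us].
  by apply: prod_XsubC_eq; rewrite -hrs (Ptrib_prod_cubes t_cube sum_u sum_prod2_u prod_u).
have [mu mu_cube] := @uniq_map_cancel_in _ _ 0 (fun u => u ^+ 3) us
  (uniq_cubes t_cube sum_u sum_prod2_u prod_u).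
have mu_root l : l \in rs -> mu l ^+ 3 = l.
  by rewrite (perm_mem rs_cubes) => /mapP[u u_in ->]; rewrite mu_cube.
have sum_rs (f : algC -> algC) :
    \sum_(l <- rs) ctrib l * f (mu l) = \sum_(u <- us) ctrib (u ^+ 3) * f u.
  by rewrite (perm_big _ rs_cubes) big_map; apply: eq_big_seq => u u_in; rewrite mu_cube.
split; exists mu; split => //.
  exact: etrans (sum_rs id) (sum_ctrib_cube_mul_root t_cube sum_u sum_prod2_u prod_u).
exact: etrans (sum_rs (fun x => x ^- 5))
  (sum_ctrib_cube_mul_root_expN5 t_cube sum_u sum_prod2_u prod_u).
Qed.
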